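(* Let $H$ be a separable complex Hilbert space, $\{v_j\}_{j\in\mathbb N}$ an orthonormal basis of $H$, and $\{w_j\}_{j\in\mathbb N}$ a set of unit vectors in $H$. For $N\ge1$ define $T_Nf=(\langle f,w_1\rangle,\dots,\langle f,w_N\rangle,\langle f,v_{N+1}\rangle,\langle f,v_{N+2}\rangle,\dots)$ and $T_\infty f=(\langle f,w_n\rangle)_{n\in\mathbb N}$ for $f\in H$, and say $T_N\to T_\infty$ uniformly if $\sup_{\|f\|=1}\|T_Nf-T_\infty f\|_{\ell^2}\to0$ as $N\to\infty$. (a) If $T_N\to T_\infty$ uniformly, then $\lim_{N\to\infty}\|v_N-w_N\|=0$. (b) If $\{\|v_n-w_n\|\}_{n\in\mathbb N}\in\ell^2$, then $T_N\to T_\infty$ uniformly. *)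

From HB Require Import structures.
From mathcomp Require Import all_boot all_order all_algebra.
From mathcomp Require Import all_classical all_reals all_analysis.
From mathcomp Require Import complex.
Set Implicit Arguments. Unset Strict Implicit. Unset Printing Implicit Defensive.
Import Order.TTheory GRing.Theory Num.Theory numFieldNormedType.Exports.
Local Open Scope ring_scope.
Local Open Scope classical_set_scope.

Section Hilbert.
Variables (R : realType) (H : lmodType R[i]) (ip : H -> H -> R[i]).

Definition is_inner_product : Prop :=
  [/\ forall (a : R[i]) (x y z : H), ip (a *: x + y) z = a * ip x z + ip y z,
      forall x y : H, ip x y = (ip y x)^*,
      forall x : H, 0 <= ip x x
    & forall x : H, ip x x = 0 -> x = 0].

Definition hnorm (x : H) : R := Num.sqrt (complex.Re (ip x x)).

Definition ip_complete : Prop :=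
  forall u : nat -> H,
    (forall e : R, 0 < e -> exists M : nat, forall m n : nat,
        (M <= m)%N -> (M <= n)%N -> hnorm (u m - u n) < e) ->
    exists l : H, (fun n => hnorm (u n - l)) @ \oo --> (0 : R).

Definition orthonormal_basis (v : nat -> H) : Prop :=
  (forall i j : nat, ip (v i) (v j) = (i == j)%:R) /\
  (forall f : H, (forall j, ip f (v j) = 0) -> f = 0).

Definition cabs2 (z : R[i]) : R := (complex.Re z) ^+ 2 + (complex.Im z) ^+ 2.

Definition esqrt (x : \bar R) : \bar R :=
  match x with
  | EFin r => (Num.sqrt r)%:E
  | +oo%E => +oo%E
  | -oo%E => 0%E
  end.

(* Coordinates (0-indexed: coordinate n stands for index n+1 of the paper).
   T_N f has coordinate <f,w_n> for n < N and <f,v_n> for n >= N;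
   T_oo f has coordinate <f,w_n>. *)
Definition T_N (v w : nat -> H) (N : nat) (f : H) (n : nat) : R[i] :=
  if (n < N)%N then ip f (w n) else ip f (v n).
Definition T_inf (w : nat -> H) (f : H) (n : nat) : R[i] := ip f (w n).

Definition dist_l2 (v w : nat -> H) (N : nat) (f : H) : \bar R :=
  esqrt (\sum_(0 <= n <oo) (cabs2 (T_N v w N f n - T_inf w f n))%:E)%E.

Definition unif_conv (v w : nat -> H) : Prop :=
  (fun N => ereal_sup [set dist_l2 v w N f | f in [set f | hnorm f = 1]])
    @ \oo --> 0%E.

End Hilbert.

From HB Require Import structures.
From mathcomp Require Import all_boot all_order all_algebra.
From mathcomp Require Import all_classical all_reals all_analysis.
From mathcomp Require Import complex.
From mathcomp Require Import ring.
Set Implicit Arguments. Unset Strict Implicit. Unset Printing Implicit Defensive.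
Import Order.TTheory GRing.Theory Num.Theory numFieldNormedType.Exports.
Local Open Scope ring_scope.
Local Open Scope classical_set_scope.

(* The n-th coordinate of T_N f - T_oo f is 0 for n < N and <f, v_n - w_n>
   for n >= N.  Testing the unit vector f = (v_N - w_N)/||v_N - w_N|| on the
   N-th coordinate alone gives sup_{||f||=1} ||T_N f - T_oo f|| >= ||v_N - w_N||,
   which is (a).  Conversely, Cauchy-Schwarz bounds every coordinate n >= N
   by ||v_n - w_n||, so the supremum is at most the square root of the tail
   sum_{n>=N} ||v_n - w_n||^2 of a convergent series, which is (b). *)

Lemma cabs2_ge0 (R : realType) (z : R[i]) : 0 <= cabs2 z.
Proof. by rewrite /cabs2 addr_ge0 // sqr_ge0. Qed.

Lemma esqrt_ge0 (R : realType) (x : \bar R) : (0 <= esqrt x)%E.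
Proof. by case: x => [r||] //=; rewrite lee_fin sqrtr_ge0. Qed.

Lemma le_esqrt (R : realType) (x y : \bar R) :
  (0 <= x)%E -> (x <= y)%E -> (esqrt x <= esqrt y)%E.
Proof.
case: x => [r||]; case: y => [s||] //=; rewrite ?lee_fin => r0 rs.
- by rewrite ler_sqrt // (le_trans r0 rs).
- exact: leey.
Qed.

Lemma esqrt_cvg0 (R : realType) (T : Type) (F : set_system T) {FF : Filter F}
    (t : T -> \bar R) :
  t @ F --> 0%E -> (fun x => esqrt (t x)) @ F --> 0%E.
Proof.
move=> /fine_cvgP[t_fin t_cvg]; apply/fine_cvgP; split.
  by apply: filterS t_fin => x; case: (t x).
have sqrt_cvg : (Num.sqrt \o (fine \o t)) @ F --> 0.
  apply: cvg_comp t_cvg _.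
  by have := @sqrt_continuous R 0; rewrite /continuous_at sqrtr0; apply.
apply: cvg_trans sqrt_cvg; apply: near_eq_cvg; apply: filterS t_fin => x.
by rewrite /=; case: (t x).
Qed.

Section InnerProduct.
Variables (R : realType) (H : lmodType R[i]) (ip : H -> H -> R[i]).
Hypothesis ipP : is_inner_product ip.

Lemma ipDl x y z : ip (x + y) z = ip x z + ip y z.
Proof. by case: ipP => lin _ _ _; have := lin 1 x y z; rewrite scale1r mul1r. Qed.

Lemma ip0l z : ip 0 z = 0.
Proof. by apply/esym/(addrI (ip 0 z)); rewrite -ipDl !addr0. Qed.

Lemma ipZl a x z : ip (a *: x) z = a * ip x z.
Proof.
by case: ipP => lin _ _ _; have := lin a x 0 z; rewrite addr0 ip0l addr0.
Qed.

Lemma ipBl x y z : ip (x - y) z = ip x z - ip y z.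
Proof. by rewrite ipDl -scaleN1r ipZl mulN1r. Qed.

Lemma ipZr a x z : ip x (a *: z) = a^* * ip x z.
Proof. by case: ipP => _ sym _ _; rewrite sym ipZl rmorphM /= -sym. Qed.

Lemma ipBr x y z : ip x (y - z) = ip x y - ip x z.
Proof. by case: ipP => _ sym _ _; rewrite sym ipBl rmorphB /= -!sym. Qed.

Lemma ip0r z : ip z 0 = 0.
Proof. by rewrite -(subrr z) ipBr subrr. Qed.

Lemma ip_selfE x : ip x x = (complex.Re (ip x x))%:C%C.
Proof. by case: ipP => _ _ ge0 _; rewrite RRe_real // ger0_real. Qed.

Lemma hnorm_ge0 x : 0 <= hnorm ip x.
Proof. exact: sqrtr_ge0. Qed.

Lemma hnorm_sqr x : hnorm ip x ^+ 2 = complex.Re (ip x x).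
Proof.
case: ipP => _ _ ge0 _; rewrite sqr_sqrtr //.
by move: (ge0 x); rewrite lecE => /andP[].
Qed.

Lemma hnormZ (r : R) x : hnorm ip (r%:C%C *: x) = `|r| * hnorm ip x.
Proof.
rewrite /hnorm ipZl ipZr conj_Creal ?complex_real // mulrA (ip_selfE x) -!rmorphM /=.
by rewrite -expr2 sqrtrM ?sqr_ge0 // sqrtr_sqr.
Qed.

Lemma ip_normalized x :
  0 < hnorm ip x -> ip ((hnorm ip x)^-1%:C%C *: x) x = (hnorm ip x)%:C%C.
Proof.
move=> x_gt0; rewrite ipZl ip_selfE -hnorm_sqr -rmorphM /=.
by rewrite expr2 mulKf // gt_eqF.
Qed.

Lemma ip_cauchy_schwarz f g : `|ip f g| ^+ 2 <= ip f f * ip g g.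
Proof.
have [->|g_neq0] := eqVneq g 0; first by rewrite !ip0r normr0 expr0n mulr0.
case: ipP => _ sym ge0 def.
set c := ip f g; set b := ip g g; set a := ip f f.
have b_neq0 : b != 0 by apply: contra_neq g_neq0 => /def.
have b_gt0 : 0 < b by rewrite lt_def b_neq0 ge0.
(* expand 0 <= <f - t g, f - t g> for the optimal t = <f,g>/<g,g> *)
have := ge0 (f - (c / b) *: g).
rewrite ipBl !ipBr !ipZl !ipZr -/a -/b -/c [ip g f]sym -/c.
rewrite rmorphM /= fmorphV /= (geC0_conj (ltW b_gt0)).
have -> : a - c^* / b * c - (c / b * c^* - c / b * (c^* / b * b)) =
          a - c * c^* / b by field.
by rewrite -normCK subr_ge0 ler_pdivrMr.
Qed.

Lemma cabs2_ip_le f g : cabs2 (ip f g) <= hnorm ip f ^+ 2 * hnorm ip g ^+ 2.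
Proof.
have := ip_cauchy_schwarz f g.
by rewrite -add_Re2_Im2 (ip_selfE f) (ip_selfE g) -rmorphM lecR !hnorm_sqr.
Qed.

Section Coordinates.
Variables v w : nat -> H.

Definition unif_dist (N : nat) : \bar R :=
  ereal_sup [set dist_l2 ip v w N f | f in [set f | hnorm ip f = 1]].

Lemma T_N_subE N f n :
  T_N ip v w N f n - T_inf ip w f n = if (n < N)%N then 0 else ip f (v n - w n).
Proof. by rewrite /T_N /T_inf; case: ifP => _; rewrite ?subrr ?ipBr. Qed.

Lemma coord_le_dist_l2 N f n :
  ((Num.sqrt (cabs2 (T_N ip v w N f n - T_inf ip w f n)))%:E
    <= dist_l2 ip v w N f)%E.
Proof.
apply: (@le_esqrt _ (_%:E)); first by rewrite lee_fin cabs2_ge0.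
rewrite (@nneseriesD1 R _ n xpredT) // => [|k _]; last by rewrite lee_fin cabs2_ge0.
by rewrite leeDl // nneseries_ge0 // => k _ _; rewrite lee_fin cabs2_ge0.
Qed.

Lemma dist_l2_le_tail N f : hnorm ip f <= 1 ->
  (dist_l2 ip v w N f <= esqrt (\sum_(N <= k <oo) (hnorm ip (v k - w k) ^+ 2)%:E))%E.
Proof.
move=> f_le1; apply: le_esqrt.
  by apply: nneseries_ge0 => k _ _; rewrite lee_fin cabs2_ge0.
rewrite [X in (_ <= X)%E]eseries_cond [X in (_ <= X)%E]eseries_mkcondr.
apply: (@lee_nneseries R _ _ xpredT) => [k _ _|k _]; first by rewrite lee_fin cabs2_ge0.
rewrite T_N_subE; case: ltnP => _ /=; first by rewrite /cabs2 /= expr0n /= addr0.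
rewrite lee_fin (le_trans (cabs2_ip_le _ _)) // ler_piMl ?sqr_ge0 //.
by rewrite expr_le1 ?hnorm_ge0.
Qed.

Lemma unif_dist_ge0 e N : hnorm ip e = 1 -> (0 <= unif_dist N)%E.
Proof.
move=> e1; apply: le_trans (ereal_sup_ubound (ex_intro2 _ _ e e1 erefl)).
exact: esqrt_ge0.
Qed.

Lemma hnorm_le_unif_dist e N : hnorm ip e = 1 ->
  ((hnorm ip (v N - w N))%:E <= unif_dist N)%E.
Proof.
move=> e1; set d := v N - w N; set r := hnorm ip d.
have [->|r_neq0] := eqVneq r 0; first exact: unif_dist_ge0 e1.
have r_gt0 : 0 < r by rewrite lt_def r_neq0 hnorm_ge0.
set f := r^-1%:C%C *: d.
have f1 : hnorm ip f = 1 by rewrite hnormZ ger0_norm ?invr_ge0 ?ltW // mulVf.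
apply: le_trans (ereal_sup_ubound (ex_intro2 _ _ f f1 erefl)).
apply: le_trans (coord_le_dist_l2 N f N).
rewrite T_N_subE ltnn ip_normalized // /cabs2 /= expr0n addr0 /=.
by rewrite sqrtr_sqr lee_fin ger0_norm // ltW.
Qed.

Lemma unif_dist_le_tail N :
  (unif_dist N <= esqrt (\sum_(N <= k <oo) (hnorm ip (v k - w k) ^+ 2)%:E))%E.
Proof. by apply: ge_ereal_sup => _ [f f1 <-]; apply: dist_l2_le_tail; rewrite f1. Qed.

End Coordinates.
End InnerProduct.

Theorem mainTheorem7 (R : realType) (H : lmodType R[i]) (ip : H -> H -> R[i])
  (v w : nat -> H) :
  is_inner_product ip -> ip_complete ip ->
  orthonormal_basis ip v ->
  (forall j : nat, hnorm ip (w j) = 1) ->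
  (unif_conv ip v w ->
     (fun N => hnorm ip (v N - w N)) @ \oo --> (0 : R)) /\
  ((\sum_(0 <= n <oo) ((hnorm ip (v n - w n)) ^+ 2)%:E < +oo)%E ->
     unif_conv ip v w).
Proof.
move=> ipP _ _ w1; rewrite /unif_conv -/(unif_dist ip v w); split.
  move=> unif_cvg; apply: (@fine_cvg _ _ _ _ (fun N => (hnorm ip (v N - w N))%:E)).
  apply: (squeeze_cvge _ (cvg_cst 0%E) unif_cvg); apply: nearW => N.
  by rewrite lee_fin hnorm_ge0 (hnorm_le_unif_dist ipP v w N (w1 0%N)).
move=> sum_fin.
have tail_cvg := @nneseries_tail_cvg R _ xpredT sum_fin (fun k _ => sqr_ge0 _).
apply: (squeeze_cvge _ (cvg_cst 0%E) (esqrt_cvg0 tail_cvg)); apply: nearW => N.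
by rewrite (unif_dist_ge0 v w N (w1 0%N)) unif_dist_le_tail.
Qed.
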